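(* Let $\alpha,\beta\in\Bbbk^n$ and $\mathcal H=\mathcal H(\alpha,\beta,0)$, graded by path length. Then the total Hilbert series of $\mathcal H$ is $h^{\mathrm{tot}}_{\mathcal H}(t)=n(1-t)^{-2}(1-t^2)^{-1}$.
   Context: $\Bbbk$ is an algebraically closed field of characteristic zero. Fix $n\ge1$; indices are taken modulo $n$ and $Q_0=\{0,\dots,n-1\}$. Let $Q$ be the quiver with vertex set $Q_0$ and arrows $u_i:i\to i+1$ and $d_i:i+1\to i$ for each $i\in Q_0$. Paths are written left to right (target of each arrow equals source of the next), $e_i$ is the trivial path at $i$. For $\alpha,\beta\in\Bbbk^n$, $\mathcal H(\alpha,\beta,0)$ is $\Bbbk Q$ modulo the relations $d_{i-1}u_{i-1}u_i=\alpha_iu_id_iu_i+\beta_iu_iu_{i+1}d_{i+1}$ and $d_id_{i-1}u_{i-1}=\alpha_id_iu_id_i+\beta_iu_{i+1}d_{i+1}d_i$ for all $i\in Q_0$. It is $\mathbb N$-graded with $\deg u_i=\deg d_i=1$, $\deg e_i=0$. For a graded quotient $A=\Bbbk Q/I$, let $H_k\in M_n(\mathbb N)$ have $(i,j)$ entry $\dim_\Bbbk e_iA_ke_j$; the total Hilbert series $h_A^{\mathrm{tot}}(t)$ is the series whose coefficient of $t^k$ is the sum of the entries of $H_k$. *)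

From HB Require Import structures.
From mathcomp Require Import all_boot all_order all_algebra.
Set Implicit Arguments. Unset Strict Implicit. Unset Printing Implicit Defensive.
Import GRing.Theory.
Local Open Scope ring_scope.

(* Quiver Q: vertices 'I_n, arrows (i, true) = u_i : i -> i+1,
   (i, false) = d_i : i+1 -> i (indices mod n via ordS / ord_pred). *)
Section Quiver.
Variable n : nat.

Definition arrow := ('I_n * bool)%type.
Definition u_ (i : 'I_n) : arrow := (i, true).
Definition d_ (i : 'I_n) : arrow := (i, false).
Definition src (a : arrow) : 'I_n := if a.2 then a.1 else ordS a.1.
Definition tgt (a : arrow) : 'I_n := if a.2 then ordS a.1 else a.1.

(* a path is a start vertex together with a word of arrows, written left to
   right (target of each arrow = source of the next) *)
Fixpoint valid_from (s : 'I_n) (w : seq arrow) : bool :=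
  if w is a :: w' then (src a == s) && valid_from (tgt a) w' else true.
Definition endv (s : 'I_n) (w : seq arrow) : 'I_n := last s (map tgt w).

Variable F : fieldType.

Definition cand (k : nat) := ('I_n * k.-tuple arrow)%type.
(* ambient space with basis the candidates; kQ_k is the span of the valid ones *)
Definition amb (k : nat) := {ffun cand k -> F^o}.

Definition delta k (s : 'I_n) (w : seq arrow) : amb k :=
  [ffun x : cand k => ((x.1 == s) && (tval x.2 == w))%:R].

Definition kQ (k : nat) : {vspace amb k} :=
  (\sum_(x : cand k | valid_from x.1 x.2) <[delta k x.1 x.2]>)%VS.

(* the relations of H(alpha,beta,0) at vertex i, as (source, list of
   (coefficient, word)) *)
Variables alpha beta : 'I_n -> F.
Definition rel (i : 'I_n) (c : bool) : 'I_n * seq (F * seq arrow) :=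
  let ip := ord_pred i in let i1 := ordS i in
  if c then
    (i, [:: (1, [:: d_ ip; u_ ip; u_ i]);
            (- alpha i, [:: u_ i; d_ i; u_ i]);
            (- beta i, [:: u_ i; u_ i1; d_ i1])])
  else
    (i1, [:: (1, [:: d_ i; d_ ip; u_ ip]);
             (- alpha i, [:: d_ i; u_ i; d_ i]);
             (- beta i, [:: u_ i1; d_ i1; d_ i])]).

Definition relword1 (i : 'I_n) (c : bool) : seq arrow :=
  head [::] (map snd (rel i c).2).

Definition gen k (s : 'I_n) (a b : seq arrow) (i : 'I_n) (c : bool) : amb k :=
  if valid_from s (a ++ relword1 i c ++ b) then
    \sum_(cw <- (rel i c).2) cw.1 *: delta k s (a ++ cw.2 ++ b)
  else 0.

Definition Ideal (k : nat) : {vspace amb k} :=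
  (\sum_(l < k - 2) \sum_(s : 'I_n) \sum_(a : l.-tuple arrow)
     \sum_(b : (k - 3 - l).-tuple arrow) \sum_(i : 'I_n) \sum_(c : bool)
       <[gen k s a b i c]>)%VS.

(* left multiplication by e_i and right multiplication by e_j *)
Definition eproj k (i j : 'I_n) (f : amb k) : amb k :=
  [ffun x : cand k => if (x.1 == i) && (endv x.1 x.2 == j) then f x else 0].
Definition esand k (i j : 'I_n) (U : {vspace amb k}) : {vspace amb k} :=
  (linfun (@eproj k i j) @: U)%VS.

(* dim e_i A_k e_j, A = kQ / I : dim (e_i kQ_k e_j) - dim (e_i I_k e_j) *)
Definition Hk (k : nat) (i j : 'I_n) : nat :=
  (\dim (esand i j (kQ k)) - \dim (esand i j (Ideal k)))%N.

Definition Htot (k : nat) : nat := (\sum_(i : 'I_n) \sum_(j : 'I_n) Hk k i j)%N.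
End Quiver.

(* formal power series identity h(t) * q(t) = p(t) in Z[[t]] *)
Definition series_mul_eq (h : nat -> int) (q p : {poly int}) : Prop :=
  forall k : nat, \sum_(m < k.+1) h m * q`_(k - m) = p`_k.

(* Read the defining relations as rewriting rules replacing the leading paths
   d_{i-1}u_{i-1}u_i and d_i d_{i-1}u_{i-1} by their alpha- and beta-terms.  On direction
   words (u = up, d = down) the leading paths are exactly the factors d?u, every rewrite step
   lowers the number of pairs (d, later u), and the only overlap, d d u u, resolves.  By the
   diamond lemma the paths whose direction word has no factor d?u form a basis of H, so
   dim H_k = n f(k) with f(k) the number of such words of length k.  Splitting words by their
   first two letters gives f(k+2) = f(k) + k + 3, the recursion of the coefficients of
   (1-t)^{-2}(1-t^2)^{-1}. *)

From Pilot Require Import Defs.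
From HB Require Import structures.
From mathcomp Require Import all_boot all_order all_algebra.
From mathcomp Require Import zify ring.
Import GRing.Theory.
Local Open Scope ring_scope.

Set Implicit Arguments. Unset Strict Implicit. Unset Printing Implicit Defensive.

(* A path is coded by its start vertex and its direction word (true = u, false = d); the
   leading path of a relation has direction word [redex c], its alpha- and beta-terms have
   direction words [redexA c] and [redexB c]. *)
Definition redex (c : bool) : seq bool := [:: false; c; true].
Definition redexA (c : bool) : seq bool :=
  if c then [:: true; false; true] else [:: false; true; false].
Definition redexB (c : bool) : seq bool :=
  if c then [:: true; true; false] else [:: true; false; false].

Lemma size_infix_redexA x c y : size (x ++ redexA c ++ y) = size (x ++ redex c ++ y).
Proof. by rewrite !size_cat; case: c. Qed.

Lemma size_infix_redexB x c y : size (x ++ redexB c ++ y) = size (x ++ redex c ++ y).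
Proof. by rewrite !size_cat; case: c. Qed.

Fixpoint inversions (w : seq bool) : nat :=
  if w is a :: w' then ((if a then 0 else count id w') + inversions w')%N else 0%N.

Lemma inversions_cat x z :
  inversions (x ++ z) = (inversions x + count negb x * count id z + inversions z)%N.
Proof. by elim: x => [|a x IH] //=; rewrite IH count_cat; case: a => /=; lia. Qed.

Lemma inversions_lt_infix x y z z' :
    count id z = count id z' -> count negb z = count negb z' -> (inversions z < inversions z')%N ->
  (inversions (x ++ z ++ y) < inversions (x ++ z' ++ y))%N.
Proof. by move=> eq_u eq_d lt_zz'; rewrite !inversions_cat !count_cat eq_u eq_d; lia. Qed.

Lemma inversions_redexA x c y :
  (inversions (x ++ redexA c ++ y) < inversions (x ++ redex c ++ y))%N.
Proof. by apply: inversions_lt_infix; case: c. Qed.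

Lemma inversions_redexB x c y :
  (inversions (x ++ redexB c ++ y) < inversions (x ++ redex c ++ y))%N.
Proof. by apply: inversions_lt_infix; case: c. Qed.

Fixpoint first_redex (w : seq bool) : option (seq bool * bool * seq bool) :=
  match w with
  | false :: c :: true :: y => Some ([::], c, y)
  | a :: w' => omap (fun '(x, c, y) => (a :: x, c, y)) (first_redex w')
  | [::] => None
  end.

Variant first_redex_spec (w : seq bool) : option (seq bool * bool * seq bool) -> Type :=
| NoRedex of (forall x c y, w <> x ++ redex c ++ y) : first_redex_spec w None
| FirstRedex x c y of w = x ++ redex c ++ y
    & (forall x' c' y', w = x' ++ redex c' ++ y' -> size x <= size x')%N :
    first_redex_spec w (Some (x, c, y)).

Lemma first_redexP w : first_redex_spec w (first_redex w).
Proof.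
elim: w => [|a w IH]; first by constructor=> -[].
have first_redex_tail : (forall c y, a :: w <> redex c ++ y) ->
    first_redex_spec (a :: w) (omap (fun '(x, c, y) => (a :: x, c, y)) (first_redex w)).
  move=> not_head; case: IH => [no_redex|x c y def_w min_x] /=.
    by constructor=> -[|a' x'] c' y' /= => [/not_head|[_ /no_redex]].
  constructor=> [|[|a' x'] c' y' /= eq_w]; first by rewrite def_w.
    by case: (not_head c' y').
  by case: eq_w => _ /min_x.
case: a w IH first_redex_tail => [|] [|[] [|[] y]] IH first_redex_tail //=;
  try (by apply: first_redex_tail => c' y' []);
  by constructor=> // -[|? ?].
Qed.

Lemma redex_overlap x0 c0 y0 x c y :
    x0 ++ redex c0 ++ y0 = x ++ redex c ++ y -> (size x0 <= size x)%N ->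
  [\/ [/\ x = x0, c = c0 & y = y0],
      [/\ x = rcons x0 false, c0 = false, c = true & y0 = true :: y]
    | exists z, x = x0 ++ redex c0 ++ z /\ y0 = z ++ redex c ++ y].
Proof.
move=> eq_w le_x0x.
have def_x : x = x0 ++ drop (size x0) x.
  by rewrite -{1}(cat_take_drop (size x0) x) -(takel_cat (redex c ++ y) le_x0x) -eq_w
    take_size_cat.
move: eq_w; rewrite def_x -catA => /(congr1 (drop (size x0))); rewrite !drop_size_cat //.
case: (drop _ _) => [|z1 [|z2 [|z3 z]]] /=.
- by case=> -> ->; constructor 1; rewrite cats0.
- by case=> -> -> -> ->; constructor 2; rewrite cats1.
- by case: c0 c => -[].
- by case=> -> -> -> ->; constructor 3; exists z.
Qed.

Section Walks.
Variable n : nat.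

Definition step (v : 'I_n) (b : bool) : 'I_n := if b then ordS v else ord_pred v.
Definition walk (s : 'I_n) (w : seq bool) : 'I_n := foldl step s w.

Lemma walk_cat s x y : walk s (x ++ y) = walk (walk s x) y.
Proof. exact: foldl_cat. Qed.

Lemma walk_redexA v c : walk v (redexA c) = walk v (redex c).
Proof. by case: c; rewrite /walk /= ?ordSK ?ord_predK. Qed.

Lemma walk_redexB v c : walk v (redexB c) = walk v (redex c).
Proof. by case: c; rewrite /walk /= ?ordSK ?ord_predK. Qed.

Lemma walk_infix_redexA s x c y : walk s (x ++ redexA c ++ y) = walk s (x ++ redex c ++ y).
Proof. by rewrite !walk_cat walk_redexA. Qed.

Lemma walk_infix_redexB s x c y : walk s (x ++ redexB c ++ y) = walk s (x ++ redex c ++ y).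
Proof. by rewrite !walk_cat walk_redexB. Qed.

(* The index i of the relation whose leading path, d_{i-1}u_{i-1}u_i (c = true) or
   d_i d_{i-1}u_{i-1} (c = false), starts at v. *)
Definition rel_index (c : bool) (v : 'I_n) : 'I_n := if c then v else ord_pred v.

Definition arr (v : 'I_n) (b : bool) : arrow n := if b then u_ v else d_ (ord_pred v).

Fixpoint path_of (v : 'I_n) (w : seq bool) : seq (arrow n) :=
  if w is b :: w' then arr v b :: path_of (step v b) w' else [::].

Lemma valid_path_of v w : valid_from v (path_of v w).
Proof. by elim: w v => //= -[] w IH v; rewrite /src /= ?ord_predK eqxx IH. Qed.

Lemma size_path_of v w : size (path_of v w) = size w.
Proof. by elim: w v => //= b w IH v; rewrite IH. Qed.

Lemma path_of_cat v x y : path_of v (x ++ y) = path_of v x ++ path_of (walk v x) y.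
Proof. by elim: x v => //= b x IH v; rewrite IH. Qed.

Lemma path_ofK v : cancel (path_of v) (map snd).
Proof. by move=> w; elim: w v => //= -[] w IH v; rewrite IH. Qed.

Lemma path_of_inj v : injective (path_of v).
Proof. exact: can_inj (path_ofK v). Qed.

Lemma valid_path_ofE v p : valid_from v p -> path_of v (map snd p) = p.
Proof.
elim: p v => //= -[i []] p IH v /andP[/eqP <- valid_p];
  by rewrite /arr /step /= ?ordSK IH.
Qed.

Lemma valid_endv v p : valid_from v p -> endv v p = walk v (map snd p).
Proof.
rewrite /endv; elim: p v => //= -[i []] p IH v /andP[/eqP <- valid_p]; rewrite IH //.
by rewrite /walk /= ordSK.
Qed.

Lemma endv_path_of v w : endv v (path_of v w) = walk v w.
Proof. by rewrite valid_endv ?valid_path_of // path_ofK. Qed.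

Lemma valid_cat (v : 'I_n) (p q : seq (arrow n)) :
  valid_from v (p ++ q) = valid_from v p && valid_from (endv v p) q.
Proof. by rewrite /endv; elim: p v => //= a p IH v; rewrite IH andbA. Qed.

End Walks.

Section NormalForm.
Variables (n : nat) (F : comNzRingType) (V : lmodType F) (alpha beta : 'I_n -> F).
Variable base : 'I_n -> seq bool -> V.

Definition coefA (s : 'I_n) (x : seq bool) (c : bool) : F := alpha (rel_index c (walk s x)).
Definition coefB (s : 'I_n) (x : seq bool) (c : bool) : F := beta (rel_index c (walk s x)).

(* Every rewrite step lowers [inversions], so the fuel [(inversions w).+1] is never exhausted. *)
Fixpoint nf_fuel (fuel : nat) (s : 'I_n) (w : seq bool) : V :=
  if fuel is f.+1 then
    if first_redex w is Some (x, c, y) then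
      coefA s x c *: nf_fuel f s (x ++ redexA c ++ y)
        + coefB s x c *: nf_fuel f s (x ++ redexB c ++ y)
    else base s w
  else base s w.

Definition nf (s : 'I_n) (w : seq bool) : V := nf_fuel (inversions w).+1 s w.

Definition nf_step (s : 'I_n) (x : seq bool) (c : bool) (y : seq bool) : V :=
  coefA s x c *: nf s (x ++ redexA c ++ y) + coefB s x c *: nf s (x ++ redexB c ++ y).

Lemma nf_fuel_enough f1 f2 s w :
  (inversions w < f1)%N -> (inversions w < f2)%N -> nf_fuel f1 s w = nf_fuel f2 s w.
Proof.
elim: f1 f2 w => [|f1 IH] [|f2] w //= lt_f1 lt_f2.
case: first_redexP => // x c y def_w _; rewrite def_w in lt_f1 lt_f2.
have ltA := inversions_redexA x c y; have ltB := inversions_redexB x c y.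
by rewrite !(IH f2) //; lia.
Qed.

Lemma nfE s w :
  nf s w = if first_redex w is Some (x, c, y) then nf_step s x c y else base s w.
Proof.
rewrite /nf /=; case: first_redexP => // x c y def_w _.
have ltA := inversions_redexA x c y; have ltB := inversions_redexB x c y; rewrite -def_w in ltA ltB.
by rewrite /nf_step /nf (@nf_fuel_enough (inversions w) (inversions (x ++ redexA c ++ y)).+1)
  ?(@nf_fuel_enough (inversions w) (inversions (x ++ redexB c ++ y)).+1).
Qed.

Lemma nf_ind s (P : seq bool -> V -> Prop) :
    (forall w, (forall x c y, w <> x ++ redex c ++ y) -> P w (base s w)) ->
    (forall x c y v1 v2, P (x ++ redexA c ++ y) v1 -> P (x ++ redexB c ++ y) v2 ->
       P (x ++ redex c ++ y) (coefA s x c *: v1 + coefB s x c *: v2)) ->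
  forall w, P w (nf s w).
Proof.
move=> P_normal P_step w; move: {2}(inversions w).+1 (ltnSn (inversions w)) => m.
elim: m w => // m IH w lt_wm.
rewrite nfE; case: first_redexP => [/P_normal //|x c y def_w _].
rewrite def_w in lt_wm *; apply: P_step; apply: IH.
  exact: leq_trans (inversions_redexA x c y) lt_wm.
exact: leq_trans (inversions_redexB x c y) lt_wm.
Qed.

Definition resolved_below (s : 'I_n) (m : nat) : Prop :=
  forall x c y, (inversions (x ++ redex c ++ y) < m)%N ->
    nf s (x ++ redex c ++ y) = nf_step s x c y.

(* The only critical pair: the two redexes of d d u u. *)
Lemma nf_step_overlap s x y :
    resolved_below s (inversions (x ++ [:: false; false; true; true] ++ y)) ->
  nf_step s x false (true :: y) = nf_step s (rcons x false) true y.
Proof.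
move=> IH.
have ltA := inversions_redexB x false (true :: y).
have ltB := inversions_redexB (rcons x false) true y.
have E1 := IH (x ++ [:: true]) false y; have E2 := IH x true (false :: y).
rewrite -cats1 -!catA /= in ltA ltB E1 E2.
rewrite /nf_step -cats1 -!catA /= E1 ?E2 // /nf_step.
by rewrite /coefA /coefB !walk_cat /rel_index /walk /= ordSK -!catA.
Qed.

Lemma nf_step_disjoint s x c z c' y :
    resolved_below s (inversions (x ++ redex c ++ z ++ redex c' ++ y)) ->
  nf_step s x c (z ++ redex c' ++ y) = nf_step s (x ++ redex c ++ z) c' y.
Proof.
move=> IH.
have lt1 := inversions_redexA x c (z ++ redex c' ++ y).
have lt2 := inversions_redexB x c (z ++ redex c' ++ y).
have lt3 := inversions_redexA (x ++ redex c ++ z) c' y.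
have lt4 := inversions_redexB (x ++ redex c ++ z) c' y.
have E1 := IH (x ++ redexA c ++ z) c' y; have E2 := IH (x ++ redexB c ++ z) c' y.
have E3 := IH x c (z ++ redexA c' ++ y); have E4 := IH x c (z ++ redexB c' ++ y).
rewrite -!catA in lt3 lt4 E1 E2.
rewrite /nf_step -!catA E1 ?E2 ?E3 ?E4 // /nf_step -!catA.
rewrite /coefA /coefB !walk_infix_redexA !walk_infix_redexB.
rewrite -/(coefA s x c) -/(coefB s x c) -/(coefA s (x ++ redex c ++ z) c').
rewrite -/(coefB s (x ++ redex c ++ z) c') !scalerDr !scalerA addrACA.
by rewrite !(mulrC (coefA s _ c')) !(mulrC (coefB s _ c')).
Qed.

Lemma nf_redex s x c y : nf s (x ++ redex c ++ y) = nf_step s x c y.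
Proof.
suff resolved m : resolved_below s m by apply: resolved (inversions _).+1 _ _ _ _.
elim: m => // m IH {}x {}c {}y lt_wm; rewrite nfE.
case: first_redexP => [/(_ x c y) // | x0 c0 y0 def_w /(_ x c y erefl) le_x0x].
have IHw : resolved_below s (inversions (x0 ++ redex c0 ++ y0)).
  by move=> x1 c1 y1 lt1; apply: IH; rewrite -def_w in lt1; apply: leq_trans lt1 lt_wm.
move: IHw; case: (redex_overlap (esym def_w) le_x0x).
- by case=> -> -> ->.
- by case=> -> -> -> ->; apply: nf_step_overlap.
- by case=> z [-> ->]; apply: nf_step_disjoint.
Qed.

End NormalForm.

Definition normal (w : seq bool) : bool := first_redex w == None.

Lemma normalP w : reflect (forall x c y, w <> x ++ redex c ++ y) (normal w).
Proof. by rewrite /normal; case: first_redexP => [|x c y def_w _]; constructor=> // /(_ x c y). Qed.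

Fixpoint words (m : nat) : seq (seq bool) :=
  if m is m'.+1 then [seq true :: w | w <- words m'] ++ [seq false :: w | w <- words m']
  else [:: [::]].

Lemma mem_words m w : (w \in words m) = (size w == m).
Proof.
have mem_cons b b' (v : seq bool) s : (b :: v \in [seq b' :: u | u <- s]) = (b == b') && (v \in s).
  by apply/mapP/andP => [[u ? [-> ->]] | [/eqP -> ?]]; [split | exists v].
elim: m w => [|m IH] [|b w] //=; rewrite mem_cat.
  by apply/negbTE; rewrite negb_or; apply/andP; split; apply/mapP => -[].
by rewrite (mem_cons _ true) (mem_cons _ false) IH eqSS; case: b; rewrite ?orbF.
Qed.

Lemma uniq_words m : uniq (words m).
Proof.
elim: m => //= m IH; rewrite cat_uniq !map_inj_uniq ?IH => [|? ? []|? ? []] //=.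
by rewrite andbT; apply/hasPn => w /mapP [? _ ->]; apply/mapP => -[].
Qed.

Definition num_normal (m : nat) : nat := count normal (words m).

Lemma sum_count_fiber (T : Type) (I : finType) (P : pred T) (f : T -> I) (s : seq T) :
  (\sum_(j : I) count (fun x => P x && (f x == j)) s)%N = count P s.
Proof.
elim: s => [|x s IH] /=; first by rewrite big1.
rewrite big_split /= IH; congr (_ + _)%N; case: (P x) => /=; last by rewrite big1.
by rewrite (bigD1 (f x)) //= eqxx big1 // => j /negbTE; rewrite eq_sym => ->.
Qed.

Section PathAlgebra.
Variables (n : nat) (F : fieldType) (alpha beta : 'I_n -> F) (k : nat).
Local Notation V := (amb n F k).

Definition pathv (s : 'I_n) (w : seq bool) : V := delta F k s (path_of s w).
Local Notation nfv := (nf alpha beta pathv).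

Definition rel_src (i : 'I_n) (c : bool) : 'I_n := if c then i else ordS i.

Lemma rel_index_src i c : rel_index c (rel_src i c) = i.
Proof. by case: c; rewrite /= ?ordSK. Qed.

Lemma rel_wordsE i c : (Defs.rel alpha beta i c).2 =
  [:: (1, path_of (rel_src i c) (redex c)); (- alpha i, path_of (rel_src i c) (redexA c));
      (- beta i, path_of (rel_src i c) (redexB c))].
Proof. by case: c; rewrite /rel /rel_src /= /arr /step /= ?ord_predK ?ordSK. Qed.

Lemma relword1E i c : relword1 alpha beta i c = path_of (rel_src i c) (redex c).
Proof. by rewrite /relword1 rel_wordsE. Qed.

Lemma valid_relword1 v i c : valid_from v (relword1 alpha beta i c) -> v = rel_src i c.
Proof. by rewrite relword1E; case: c => /= /andP[/eqP <- _]; rewrite /src /= ord_predK. Qed.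

Definition relator (s : 'I_n) (x : seq bool) (c : bool) (y : seq bool) : V :=
  pathv s (x ++ redex c ++ y) - coefA alpha s x c *: pathv s (x ++ redexA c ++ y)
    - coefB beta s x c *: pathv s (x ++ redexB c ++ y).

Lemma gen_relator s a b i c : gen alpha beta k s a b i c =
  if valid_from s (a ++ relword1 alpha beta i c ++ b)
  then relator s (map snd a) c (map snd b) else 0.
Proof.
rewrite /gen; case: ifP => // valid_arb.
move: (valid_arb); rewrite !valid_cat => /and3P[valid_a /valid_relword1 src_r valid_b].
rewrite relword1E src_r endv_path_of in valid_b.
have path_split r : walk (rel_src i c) r = walk (rel_src i c) (redex c) ->
    path_of s (map snd a ++ r ++ map snd b) = a ++ path_of (rel_src i c) r ++ b.
  move=> walk_r; rewrite !path_of_cat (valid_path_ofE valid_a) -(valid_endv valid_a) src_r.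
  by rewrite walk_r (valid_path_ofE valid_b).
rewrite rel_wordsE !big_cons big_nil addr0 scale1r !scaleNr addrA.
rewrite /relator /pathv !path_split ?walk_redexA ?walk_redexB //.
by rewrite /coefA /coefB -(valid_endv valid_a) src_r rel_index_src.
Qed.

Lemma pathv_kQ s w : size w = k -> pathv s w \in kQ n F k.
Proof.
move=> size_w; have size_p : size (path_of s w) == k by rewrite size_path_of size_w.
by rewrite memvE /kQ (sumv_sup (s, Tuple size_p)) //= valid_path_of.
Qed.

Lemma relator_kQ s x c y : size (x ++ redex c ++ y) = k -> relator s x c y \in kQ n F k.
Proof.
by move=> size_w; rewrite /relator !memvB ?memvZ ?pathv_kQ ?size_infix_redexA ?size_infix_redexB.
Qed.

Lemma relator_Ideal s x c y :
  size (x ++ redex c ++ y) = k -> relator s x c y \in Ideal alpha beta k.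
Proof.
rewrite !size_cat /= => size_w; have lt_x : (size x < k - 2)%N by lia.
have size_a : size (path_of s x) == Ordinal lt_x by rewrite size_path_of.
have size_b : size (path_of (walk (walk s x) (redex c)) y) == (k - 3 - Ordinal lt_x)%N.
  by rewrite size_path_of /=; apply/eqP; lia.
pose i := rel_index c (walk s x).
have src_i : rel_src i c = walk s x by rewrite /i; case: (c); rewrite /= ?ord_predK.
rewrite memvE /Ideal (sumv_sup (Ordinal lt_x)) // (sumv_sup s) // (sumv_sup (Tuple size_a)) //
  (sumv_sup (Tuple size_b)) // (sumv_sup i) // (sumv_sup c) // -memvE /= gen_relator.
rewrite relword1E src_i -!path_of_cat valid_path_of !path_ofK.
exact: memv_line.
Qed.

Lemma size_gen_word l (a : l.-tuple (arrow n)) (b : (k - 3 - l).-tuple (arrow n)) c :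
  (l < k - 2)%N -> size (map snd a ++ redex c ++ map snd b) = k.
Proof. by move=> lt_l; rewrite !size_cat !size_map !size_tuple /=; lia. Qed.

Lemma Ideal_kQ : (Ideal alpha beta k <= kQ n F k)%VS.
Proof.
apply/subv_sumP => l _; apply/subv_sumP => s _; apply/subv_sumP => a _.
apply/subv_sumP => b _; apply/subv_sumP => i _; apply/subv_sumP => c _.
rewrite -memvE gen_relator; case: ifP => _; last exact: mem0v.
exact/relator_kQ/size_gen_word.
Qed.

Lemma eproj_is_linear i j : linear (@eproj n F k i j).
Proof. by move=> a f g; apply/ffunP => x; rewrite !ffunE; case: ifP; rewrite ?scaler0 ?addr0. Qed.
HB.instance Definition _ i j :=
  GRing.isLinear.Build F V V *:%R (@eproj n F k i j) (eproj_is_linear i j).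

Lemma eproj_pathv i j s w :
  eproj i j (pathv s w) = if (s == i) && (walk s w == j) then pathv s w else 0.
Proof.
apply/ffunP => -[s' t]; rewrite !ffunE /=.
case: (boolP ((s' == s) && (tval t == path_of s w))) => [/andP[/eqP -> /eqP eq_t]|not_sw].
  by rewrite eq_t endv_path_of; case: ifP => _; rewrite ?ffunE /= ?eq_t ?eqxx.
by do 2?case: ifP => _; rewrite ?ffunE /= ?(negbTE not_sw).
Qed.

Lemma eproj_nf i j s w :
  eproj i j (nfv s w) = if (s == i) && (walk s w == j) then nfv s w else 0.
Proof.
apply: (nf_ind (P := fun w v => eproj i j v = if (s == i) && (walk s w == j) then v else 0)).
  by move=> {}w _; rewrite eproj_pathv.
move=> x c y v1 v2 eq1 eq2; rewrite linearD !linearZ /= eq1 eq2.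
by rewrite walk_infix_redexA walk_infix_redexB; case: ifP; rewrite ?scaler0 ?addr0.
Qed.

Definition nf_cand (x : cand n k) : V := if valid_from x.1 x.2 then nfv x.1 (map snd x.2) else 0.

Definition normalize (f : V) : V := \sum_(x : cand n k) f x *: nf_cand x.

Lemma normalize_is_linear : linear normalize.
Proof.
move=> a f g; rewrite /normalize scaler_sumr -big_split; apply: eq_bigr => x _.
by rewrite !ffunE scalerDl scalerA.
Qed.
HB.instance Definition _ := GRing.isLinear.Build F V V *:%R normalize normalize_is_linear.

Lemma normalize_delta s (t : k.-tuple (arrow n)) : normalize (delta F k s t) = nf_cand (s, t).
Proof.
rewrite /normalize (bigD1 (s, t)) //= big1 ?addr0; first by rewrite ffunE !eqxx scale1r.
move=> [s' t'] /= ne_st; rewrite ffunE /=.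
suff -> : (s' == s) && (tval t' == tval t) = false by rewrite scale0r.
by apply: contraNF ne_st => /andP[/eqP -> /eqP /val_inj ->].
Qed.

Lemma normalize_pathv s w : size w = k -> normalize (pathv s w) = nfv s w.
Proof.
move=> size_w; have size_p : size (path_of s w) == k by rewrite size_path_of size_w.
by rewrite /pathv (_ : path_of s w = Tuple size_p) // normalize_delta /nf_cand /=
  valid_path_of path_ofK.
Qed.

Lemma normalize_relator s x c y : size (x ++ redex c ++ y) = k -> normalize (relator s x c y) = 0.
Proof.
move=> size_w; rewrite /relator !linearB !linearZ /= !normalize_pathv
  ?size_infix_redexA ?size_infix_redexB // nf_redex.
by rewrite /nf_step !scalerN addrAC addrK subrr.
Qed.

Lemma Ideal_ker : (Ideal alpha beta k <= lker (linfun normalize))%VS.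
Proof.
apply/subv_sumP => l _; apply/subv_sumP => s _; apply/subv_sumP => a _.
apply/subv_sumP => b _; apply/subv_sumP => i _; apply/subv_sumP => c _.
rewrite -memvE memv_ker lfunE /= gen_relator; case: ifP => _; last by rewrite linear0.
by rewrite normalize_relator // size_gen_word.
Qed.

Lemma normalize_eproj i j f : normalize (eproj i j f) = eproj i j (normalize f).
Proof.
rewrite /normalize linear_sum; apply: eq_bigr => -[s t] _ /=.
rewrite linearZ /= ffunE /= /nf_cand /=.
case valid_t: (valid_from s t); last by rewrite (linear0 (eproj i j)) !scaler0.
by rewrite eproj_nf -(valid_endv valid_t); case: ifP => _; rewrite ?scaler0 ?scale0r.
Qed.

Lemma pathv_sub_nf_Ideal s w : size w = k -> pathv s w - nfv s w \in Ideal alpha beta k.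
Proof.
apply: (nf_ind (P := fun w v => size w = k -> pathv s w - v \in Ideal alpha beta k)).
  by move=> {}w _ _; rewrite subrr mem0v.
move=> x c y v1 v2 IH1 IH2 size_w.
set a := coefA alpha s x c; set b := coefB beta s x c.
set A := pathv s (x ++ redexA c ++ y); set B := pathv s (x ++ redexB c ++ y).
have -> : pathv s (x ++ redex c ++ y) - (a *: v1 + b *: v2)
    = relator s x c y + b *: (B - v2) + a *: (A - v1).
  by rewrite /relator !scalerBr subrKA addrAC subrKA opprD addrA.
apply: memvD; first apply: memvD; first exact: relator_Ideal.
  by apply/memvZ/IH2; rewrite size_infix_redexB.
by apply/memvZ/IH1; rewrite size_infix_redexA.
Qed.

Lemma kQ_sub_normalize g : g \in kQ n F k -> g - normalize g \in Ideal alpha beta k.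
Proof.
suff : (kQ n F k <= (\1 - linfun normalize)%VF @^-1: Ideal alpha beta k)%VS.
  by move/subvP => sub /sub; rewrite -memv_preim add_lfunE opp_lfunE id_lfunE lfunE.
apply/subv_sumP => -[s t] /= valid_t.
rewrite -memvE -memv_preim add_lfunE opp_lfunE id_lfunE lfunE /=.
have size_t : size (map snd t) = k by rewrite size_map size_tuple.
by rewrite -(valid_path_ofE valid_t) -/(pathv s _) normalize_pathv // pathv_sub_nf_Ideal.
Qed.

Definition normal_span (s j : 'I_n) : {vspace V} :=
  <<[seq pathv s w | w <- [seq w <- words k | normal w && (walk s w == j)]]>>%VS.

Lemma nf_normal_span s w : size w = k -> nfv s w \in normal_span s (walk s w).
Proof.
apply: (nf_ind (P := fun w v => size w = k -> v \in normal_span s (walk s w))).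
  move=> {}w /normalP normal_w size_w; apply/memv_span/map_f.
  by rewrite mem_filter mem_words normal_w size_w !eqxx.
move=> x c y v1 v2 IH1 IH2 size_w; apply: memvD; apply: memvZ.
  by rewrite -(walk_infix_redexA s x c y) IH1 // size_infix_redexA.
by rewrite -(walk_infix_redexB s x c y) IH2 // size_infix_redexB.
Qed.

Lemma esand_kQ_ker i j :
  (esand i j (kQ n F k) :&: lker (linfun normalize))%VS = esand i j (Ideal alpha beta k).
Proof.
apply/eqP; rewrite eqEsubv; apply/andP; split; apply/subvP => v.
  rewrite memv_cap => /andP[/memv_imgP[g kQ_g ->]]; rewrite memv_ker !lfunE /=.
  move=> /eqP normalize_g0; have -> : eproj i j g = eproj i j (g - normalize g).
    by rewrite linearB /= -normalize_eproj normalize_g0 subr0.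
  by rewrite -lfunE; apply/memv_img/kQ_sub_normalize.
move=> /memv_imgP[g Ideal_g ->]; rewrite memv_cap memv_img ?(subvP Ideal_kQ) //=.
move/(subvP Ideal_ker): Ideal_g; rewrite !memv_ker !lfunE /= normalize_eproj => /eqP ->.
by rewrite linear0.
Qed.

Lemma normalize_normal s w : size w = k -> normal w -> normalize (pathv s w) = pathv s w.
Proof. by move=> size_w /eqP normal_w; rewrite normalize_pathv // nfE normal_w. Qed.

Lemma eproj_nf_cand i j x : eproj i j (nf_cand x) \in normal_span i j.
Proof.
rewrite /nf_cand; case: ifP => _; last by rewrite linear0 mem0v.
rewrite eproj_nf; case: ifP => [/andP[/eqP <- /eqP <-]|_]; last exact: mem0v.
by apply: nf_normal_span; rewrite size_map size_tuple.
Qed.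

Lemma normalize_esand_kQ i j : (linfun normalize @: esand i j (kQ n F k))%VS = normal_span i j.
Proof.
apply/eqP; rewrite eqEsubv; apply/andP; split.
  apply/subvP => v /memv_imgP[u /memv_imgP[g _ ->] ->].
  rewrite !lfunE /= normalize_eproj /normalize linear_sum; apply: memv_suml => x _.
  by rewrite linearZ; apply/memvZ/eproj_nf_cand.
apply/span_subvP => v /mapP[w]; rewrite mem_filter mem_words => /andP[/andP[normal_w walk_w]].
move=> /eqP size_w ->; rewrite -(normalize_normal i size_w normal_w) -(lfunE normalize).
apply: memv_img; have -> : pathv i w = linfun (eproj i j) (pathv i w).
  by rewrite lfunE /= eproj_pathv eqxx walk_w.
exact/memv_img/pathv_kQ.
Qed.

Lemma Hk_dim i j : Hk alpha beta k i j = \dim (normal_span i j).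
Proof.
have := limg_ker_dim (linfun normalize) (esand i j (kQ n F k)).
by rewrite esand_kQ_ker normalize_esand_kQ /Hk => <-; rewrite addKn.
Qed.

Definition coord_at (x : cand n k) (f : V) : F^o := f x.

Lemma coord_at_is_linear x : linear (coord_at x).
Proof. by move=> a f g; rewrite /coord_at !ffunE. Qed.
HB.instance Definition _ x :=
  GRing.isLinear.Build F V F^o *:%R (coord_at x) (coord_at_is_linear x).

Lemma free_pathv s (L : seq (seq bool)) :
  uniq L -> all (fun w => size w == k) L -> free [seq pathv s w | w <- L].
Proof.
elim: L => [|w L IH] /=; first by rewrite /free /= span_nil dimv0.
move=> /andP[w_notin_L uniq_L] /andP[/eqP size_w size_L]; rewrite free_cons IH // andbT.
have size_p : size (path_of s w) == k by rewrite size_path_of size_w.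
pose x : cand n k := (s, Tuple size_p).
have : (<<[seq pathv s w | w <- L]>> <= lker (linfun (coord_at x)))%VS.
  apply/span_subvP => v /mapP[w' w'_in_L ->].
  rewrite memv_ker lfunE /= /coord_at ffunE /= eqxx (inj_eq (@path_of_inj _ s)).
  by have /negbTE -> : w != w' by apply: contraNneq w_notin_L => ->.
move/subvP => sub; apply/negP => /sub; rewrite memv_ker lfunE /= /coord_at ffunE /= !eqxx.
by rewrite oner_eq0.
Qed.

Lemma dim_normal_span s j :
  \dim (normal_span s j) = count (fun w => normal w && (walk s w == j)) (words k).
Proof.
rewrite -size_filter -(size_map (pathv s)); apply/eqP; apply: free_pathv.
  by rewrite filter_uniq // uniq_words.
by apply/allP => w; rewrite mem_filter mem_words => /andP[].
Qed.

Lemma Htot_count : Htot alpha beta k = (n * num_normal k)%N.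
Proof.
rewrite /Htot -[n in (n * _)%N]card_ord -sum_nat_const; apply: eq_bigr => i _.
under eq_bigr do rewrite Hk_dim dim_normal_span.
exact: sum_count_fiber.
Qed.
End PathAlgebra.

Lemma first_redex_cons a w : first_redex (a :: w) =
  if ~~ a && nth false w 1 then Some ([::], nth false w 0, drop 2 w)
  else omap (fun '(x, c, y) => (a :: x, c, y)) (first_redex w).
Proof. by case: a; case: w => [|b [|[] y]] //=; rewrite drop0. Qed.

Lemma normal_cons a w : normal (a :: w) = ~~ (~~ a && nth false w 1) && normal w.
Proof. by rewrite /normal first_redex_cons; case: ifP => //= _; case: first_redex. Qed.

Lemma count_wordsS (P : pred (seq bool)) m :
  count P (words m.+1) =
    (count (fun w => P (true :: w)) (words m) + count (fun w => P (false :: w)) (words m))%N.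
Proof. by rewrite /= count_cat !count_map. Qed.

Definition num_normal_from (a b : bool) (m : nat) : nat :=
  count (fun w => normal [:: a, b & w]) (words m).

Lemma num_normal_from0 a b : num_normal_from a b 0 = 1%N.
Proof. by case: a; case: b. Qed.

Lemma num_normal_fromS a b m :
  num_normal_from a b m.+1 =
    ((if a then num_normal_from b true m else 0) + num_normal_from b false m)%N.
Proof.
rewrite /num_normal_from count_wordsS; congr (_ + _)%N; last first.
  by apply: eq_count => w; rewrite normal_cons andbF.
case: a; first by apply: eq_count => w; rewrite normal_cons.
by rewrite (eq_count (a2 := pred0)) ?count_pred0 // => w; rewrite normal_cons.
Qed.

Lemma num_normal_from_uu m : num_normal_from true true m = num_normal m.
Proof. by apply: eq_count => w; rewrite !normal_cons. Qed.

Lemma num_normal_from_dd m : num_normal_from false false m = 1%N.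
Proof. by elim: m => [|m IH]; rewrite ?num_normal_from0 // num_normal_fromS IH. Qed.

Lemma num_normal_from_ud_du m :
  (num_normal_from true false m + num_normal_from false true m)%N = m.+2.
Proof.
elim: m => [|m IH]; rewrite ?num_normal_from0 // !num_normal_fromS num_normal_from_dd.
lia.
Qed.

Lemma num_normalSS m : num_normal m.+2 = (num_normal m + m.+3)%N.
Proof.
rewrite /num_normal !count_wordsS -!/(num_normal_from _ _ m) num_normal_from_uu.
by rewrite num_normal_from_dd -/(num_normal m); have := num_normal_from_ud_du m; lia.
Qed.

Lemma series_mul_eqZ (c : int) h q p :
  series_mul_eq h q p -> series_mul_eq (fun k => c * h k) q (c *: p).
Proof.
by move=> hqp k; rewrite coefZ -hqp mulr_sumr; apply: eq_bigr => m _; rewrite mulrA.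
Qed.

Lemma convolution_rev (h : nat -> int) (q : {poly int}) k :
  \sum_(m < k.+1) h m * q`_(k - m) = \sum_(i < k.+1) h (k - i)%N * q`_i.
Proof.
rewrite [LHS](reindex_inj rev_ord_inj) /=; apply: eq_bigr => i _.
by rewrite subSS subKn ?(ltnSE (ltn_ord i)).
Qed.

Lemma hilbert_denominator_coef i :
  ((1 - 'X) ^+ 2 * (1 - 'X ^+ 2) : {poly int})`_i = [:: 1; -2; 0; 2; -1]`_i.
Proof.
have -> : ((1 - 'X) ^+ 2 * (1 - 'X ^+ 2) : {poly int}) = Poly [:: 1; -2; 0; 2; -1].
  by rewrite /= !cons_poly_def mul0r add0r !rmorphN /= !rmorph_nat /=; ring.
exact: coef_Poly.
Qed.

Lemma num_normal_series :
  series_mul_eq (fun k => (num_normal k)%:Z) ((1 - 'X) ^+ 2 * (1 - 'X ^+ 2)) 1.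
Proof.
move=> k; rewrite (convolution_rev (fun k => (num_normal k)%:Z)) coefC.
under eq_bigr do rewrite hilbert_denominator_coef.
case: k => [|[|[|[|k]]]]; rewrite !big_ord_recl ?big_ord0 //.
rewrite big1 => [|i _]; last by rewrite nth_default ?mulr0.
by rewrite !lift0 /= !subSS !subn0 !num_normalSS; lia.
Qed.

Unset Implicit Arguments.

Theorem corollary1p3 (F : closedFieldType) (Fchar0 : [pchar F] =i pred0)
  (n : nat) (n_gt0 : (0 < n)%N) (alpha beta : 'I_n -> F) :
  series_mul_eq (fun k => (Htot alpha beta k)%:Z)
    ((1 - 'X) ^+ 2 * (1 - 'X ^+ 2)) (n%:Z)%:P.
Proof.
rewrite -alg_polyC => k; rewrite -(series_mul_eqZ n%:Z num_normal_series k).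
by apply: eq_bigr => m _; rewrite Htot_count PoszM.
Qed.
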